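(* For the Grover walk on $\mathbb{T}_\kappa$ ($\kappa\ge3$) started from $\Psi_0=\sum_j\varphi_j|e,\epsilon_j\rangle$, let $W_t$ denote its position at time $t$, i.e. $P(W_t=g)=\sum_{\epsilon\in\Sigma}|\langle g,\epsilon|U^t\Psi_0\rangle|^2$. If $\varphi=\varphi^{U}$ let $X_t$ be the walk on $\mathbb{Z}_+$ with wall defined below with $\gamma=0$, and if $\varphi=\varphi^{WU}$ let $X_t$ be that walk with $\gamma=\pi$. Then for all $t\ge0$ and all $x\in\mathbb{Z}_+$, $P(|W_t|=x)=P(X_t=x)$.
   Context: Fix $\kappa\ge3$. Let $\Sigma=\{\epsilon_0,\dots,\epsilon_{\kappa-1}\}$, $G$ the group generated by $\Sigma$ with relations $\epsilon_i^2=e$; the Cayley tree $\mathbb{T}_\kappa$ has vertices the reduced words in $G$ (root $e$), with $g\sim h$ iff $gh^{-1}\in\Sigma$; $|g|$ is the word length. The Grover walk acts on the Hilbert space with orthonormal basis $\{|g,\epsilon\rangle\}$ by $U|g,\epsilon\rangle=\sum_{\tau\in\Sigma}(-\delta_{\epsilon\tau}+2/\kappa)|\tau g,\tau\rangle$. Initial coin states: $\varphi^{U}$ with $\varphi_j=1/\sqrt\kappa$; $\varphi^{WU}$ with $\varphi_j=\omega_\kappa^{\,j}/\sqrt\kappa$, $\omega_\kappa=e^{2\pi i/\kappa}$. Walk with wall on $\mathbb{Z}_+=\{0,1,2,\dots\}$: let $a_\kappa=2\sqrt{\kappa-1}/\kappa$, $b_\kappa=1-2/\kappa$, $\gamma\in\mathbb{R}$.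 Consider the Hilbert space with orthonormal basis $\{|0,L\rangle\}\cup\{|x,L\rangle,|x,R\rangle: x\ge1\}$ and the unitary $\widetilde U$ given by $\widetilde U|0,L\rangle=e^{i\gamma}|1,R\rangle$ and, for $x\ge1$, $\widetilde U|x,L\rangle=a_\kappa|x-1,L\rangle+b_\kappa|x+1,R\rangle$, $\widetilde U|x,R\rangle=-b_\kappa|x-1,L\rangle+a_\kappa|x+1,R\rangle$. (Equivalently: coin $H_\kappa=\begin{bmatrix}a_\kappa&-b_\kappa\\ b_\kappa&a_\kappa\end{bmatrix}$ in the ordered basis $(|L\rangle,|R\rangle)$ at $x\ge1$, coin $e^{i\gamma}\begin{bmatrix}0&1\\1&0\end{bmatrix}$ at $x=0$, followed by the shift $|x,R\rangle\mapsto|x+1,R\rangle$, $|x,L\rangle\mapsto|x-1,L\rangle$.) With $\Phi_t=\widetilde U^t|0,L\rangle$, the random variable $X_t$ on $\mathbb{Z}_+$ has $P(X_t=0)=|\langle 0,L|\Phi_t\rangle|^2$ and $P(X_t=x)=|\langle x,L|\Phi_t\rangle|^2+|\langle x,R|\Phi_t\rangle|^2$ for $x\ge1$. *)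

(* all amplitudes are algebraic numbers, so we work in algC. *)
From HB Require Import structures.
From mathcomp Require Import all_boot all_order all_algebra all_field.
Set Implicit Arguments. Unset Strict Implicit. Unset Printing Implicit Defensive.
Import Order.TTheory GRing.Theory Num.Theory.
Local Open Scope ring_scope.

(* A group element is a word in the generators eps_0..eps_{k-1}, written
   left-to-right as a sequence of indices; it is reduced when no two
   consecutive letters coincide.  The root e is the empty word. *)
Definition reduced (k : nat) (s : seq 'I_k) : bool :=
  sorted (fun a b : 'I_k => a != b) s.

Definition gmul (k : nat) (tau : 'I_k) (g : seq 'I_k) : seq 'I_k :=
  if g is a :: g' then (if a == tau then g' else tau :: g) else [:: tau].

(* A state is the coefficient function (g, eps) |-> <g,eps|Psi>. *)
Definition tree_state (k : nat) := seq 'I_k -> 'I_k -> algC.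

(* Grover walk: U|g,eps> = sum_tau (-delta_{eps tau} + 2/k) |tau g, tau>,
   hence <h,tau|U Psi> = sum_eps (-delta_{eps tau} + 2/k) <tau h, eps|Psi>. *)
Definition grover_step (k : nat) (psi : tree_state k) : tree_state k :=
  fun h tau => \sum_(e < k) ((2 / k%:R) - (e == tau)%:R) * psi (gmul tau h) e.

Definition tree_init (k : nat) (phi : 'I_k -> algC) : tree_state k :=
  fun g e => if g is [::] then phi e else 0.

Definition tree_state_at (k : nat) (phi : 'I_k -> algC) (t : nat) : tree_state k :=
  iter t (@grover_step k) (tree_init phi).

Definition tree_dist_prob (k : nat) (phi : 'I_k -> algC) (t x : nat) : algC :=
  \sum_(w : x.-tuple 'I_k | reduced w)
     \sum_(e < k) `|tree_state_at phi t w e| ^+ 2.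

Definition phiU (k : nat) : 'I_k -> algC := fun _ => (sqrtC k%:R)^-1.
(* omega_k = e^{2 pi i/k} = (e^{i pi/k})^2, and k.-root (-1) is e^{i pi/k}
   (the k-th root of -1 of minimal nonnegative argument). *)
Definition omega (k : nat) : algC := (k.-root (-1)) ^+ 2.
Definition phiWU (k : nat) : 'I_k -> algC :=
  fun j => omega k ^+ (nat_of_ord j) / sqrtC k%:R.

Definition a_k (k : nat) : algC := 2%:R * sqrtC (k.-1)%:R / k%:R.
Definition b_k (k : nat) : algC := 1 - 2%:R / k%:R.

(* state: x |-> (<x,L|Phi>, <x,R|Phi>); the (0,R) component is not part of
   the Hilbert space and is kept equal to 0. [c] is the phase e^{i gamma}. *)
Definition line_state := nat -> algC * algC.

Definition line_step (k : nat) (c : algC) (psi : line_state) : line_state :=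
  fun y =>
    ( a_k k * (psi y.+1).1 - b_k k * (psi y.+1).2,
      match y with
      | 0 => 0
      | 1 => c * (psi 0%N).1
      | y'.+1 => b_k k * (psi y').1 + a_k k * (psi y').2
      end ).

Definition line_init : line_state := fun x => if x is 0 then (1, 0) else (0, 0).

Definition line_state_at (k : nat) (c : algC) (t : nat) : line_state :=
  iter t (line_step k c) line_init.

Definition line_prob (k : nat) (c : algC) (t x : nat) : algC :=
  if x is 0 then `|(line_state_at k c t 0%N).1| ^+ 2
  else `|(line_state_at k c t x).1| ^+ 2 + `|(line_state_at k c t x).2| ^+ 2.

(* The Grover walk on the Cayley tree T_k started from a coin state
   chi / sqrt k at the root, where chi is an eigenvector of the Grover coin
   2/k J - I with eigenvalue c and |chi e| = 1, stays "radial": at a reduced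
   word g = g1 :: g' of length n+1 its amplitude is chi (first letter of the
   path from the root) times the amplitude of the walk with wall of phase c at
   x = n+1, in chirality R on the outward coin e = g1 and in chirality L on
   each of the k-1 inward coins, normalised by sqrt k * sqrt (k-1)^n and
   sqrt k * sqrt (k-1)^(n+1) respectively.
   The theorem is the case chi = 1 (c = 1, i.e. gamma = 0) and
   chi j = omega^j (c = -1, i.e. gamma = pi, as the powers of omega sum to 0). *)
From HB Require Import structures.
From mathcomp Require Import all_boot all_order all_algebra all_field.
From mathcomp Require Import ring.
Import Order.TTheory GRing.Theory Num.Theory.
Local Open Scope ring_scope.

Lemma reduced_gmul k (tau : 'I_k) h : reduced h -> reduced (gmul tau h).
Proof.
case: h => [|a h] //=; case: (eqVneq a tau) => [->|ne] /=.
  by move/path_sorted.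
by rewrite /reduced /= eq_sym ne.
Qed.

Lemma big_tuple_cons (R : Type) (idx : R) (op : Monoid.com_law idx)
    (T : finType) n (F : n.+1.-tuple T -> R) :
  \big[op/idx]_(w : n.+1.-tuple T) F w =
  \big[op/idx]_(a : T) \big[op/idx]_(w : n.-tuple T) F [tuple of a :: w].
Proof.
rewrite pair_big /= (reindex (fun p : T * n.-tuple T => [tuple of p.1 :: p.2])) //.
exists (fun w : n.+1.-tuple T => (thead w, [tuple of behead w])) => [[a w] _ | w _] /=.
- by rewrite theadE; congr pair; apply: val_inj.
- by rewrite -tuple_eta.
Qed.

Lemma count_reduced_cons k n (a : 'I_k) :
  (\sum_(w : n.-tuple 'I_k) (reduced (a :: w) : nat) = k.-1 ^ n)%N.
Proof.
elim: n a => [|n IH] a.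
  by rewrite (eq_bigr (fun _ => 1%N)) ?sum_nat_const ?card_tuple // => w _; rewrite tuple0.
rewrite big_tuple_cons (eq_bigr (fun b => (a != b) * k.-1 ^ n)%N) => [|b _].
  rewrite -big_distrl /= -big_mkcond /= sum1_card.
  rewrite (eq_card (B := predC1 a)) ?cardC1 ?card_ord ?expnS // => b.
  by rewrite !inE eq_sym.
by rewrite -(IH b) big_distrr /=; apply: eq_bigr => w _; rewrite mulnb.
Qed.

Lemma count_reduced k n :
  (\sum_(w : n.+1.-tuple 'I_k) (reduced w : nat) = k * k.-1 ^ n)%N.
Proof.
rewrite big_tuple_cons (eq_bigr (fun _ => k.-1 ^ n)%N) => [|a _].
  by rewrite sum_nat_const card_ord.
exact: count_reduced_cons.
Qed.

Lemma sum_reduced_const k x (C : algC) :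
  \sum_(w : x.-tuple 'I_k | reduced w) C =
  C * (\sum_(w : x.-tuple 'I_k) (reduced w : nat))%:R.
Proof.
rewrite natr_sum mulr_sumr big_mkcond /=; apply: eq_bigr => w _.
by case: (reduced w); rewrite ?mulr1 ?mulr0.
Qed.

Lemma grover_coin_sum k (a : algC) (tau : 'I_k) (f : 'I_k -> algC) :
  \sum_(e < k) (a - (e == tau)%:R) * f e = a * \sum_(e < k) f e - f tau.
Proof.
rewrite (eq_bigr (fun e => a * f e - (e == tau)%:R * f e)) => [|e _]; last by rewrite mulrBl.
rewrite sumrB -mulr_sumr; congr (_ - _).
rewrite (bigD1 tau) //= eqxx mul1r big1 ?addr0 // => e /negbTE ->.
by rewrite mul0r.
Qed.

Section RadialAnsatz.

Variable k : nat.
Hypothesis k_ge2 : (2 <= k)%N.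

Lemma k_gt0 : (0 < k)%N. Proof. exact: leq_trans k_ge2. Qed.

Lemma predk_gt0 : (0 < k.-1)%N. Proof. by rewrite -ltnS prednK ?k_gt0. Qed.

(* The two square roots occurring in the amplitudes, sqrt k and sqrt (k-1);
   they are named so that the algebra below can treat them as atoms. *)
Definition root_k : algC := sqrtC k%:R.
Definition root_pred_k : algC := sqrtC (k.-1)%:R.

Lemma root_k_neq0 : root_k != 0.
Proof. by rewrite sqrtC_eq0 pnatr_eq0 -lt0n k_gt0. Qed.

Lemma root_pred_k_neq0 : root_pred_k != 0.
Proof. by rewrite sqrtC_eq0 pnatr_eq0 -lt0n predk_gt0. Qed.

Lemma natpredk_root : (k.-1)%:R = root_pred_k ^+ 2.
Proof. by rewrite sqrtCK. Qed.

Lemma natk_root : k%:R = root_pred_k ^+ 2 + 1.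
Proof. by rewrite -natpredk_root natr1 prednK ?k_gt0. Qed.

Lemma natk_root_neq0 : root_pred_k * root_pred_k + 1 != 0.
Proof. by rewrite -expr2 -natk_root pnatr_eq0 -lt0n k_gt0. Qed.

Lemma a_k_root : a_k k = 2 * root_pred_k / (root_pred_k ^+ 2 + 1).
Proof. by rewrite /a_k natk_root. Qed.

Lemma b_k_root : b_k k = 1 - 2 / (root_pred_k ^+ 2 + 1).
Proof. by rewrite /b_k natk_root. Qed.

Definition radial_weight (n : nat) : algC := root_k * root_pred_k ^+ n.

Ltac radial_field :=
  rewrite /radial_weight ?a_k_root ?b_k_root ?natk_root ?natpredk_root ?exprS ?expr0;
  field; by rewrite ?expf_eq0 ?(negbTE root_k_neq0) ?(negbTE root_pred_k_neq0)
             ?(negbTE natk_root_neq0) ?andbF.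

Variable chi : 'I_k -> algC.
Variable c : algC.

Hypothesis chi_eigen :
  forall e, 2%:R / k%:R * (\sum_(j < k) chi j) - chi e = chi e * c.

Definition radial_state (ls : line_state) : tree_state k := fun g e =>
  match g with
  | [::] => chi e * (ls 0%N).1 / root_k
  | g1 :: g' => chi (last g1 g') *
      (if e == g1 then (ls (size g').+1).2 / radial_weight (size g')
       else (ls (size g').+1).1 / radial_weight (size g').+1)
  end.

Lemma radial_sum_cons ls (g1 : 'I_k) g' :
  \sum_(e < k) radial_state ls (g1 :: g') e =
  chi (last g1 g') * ((ls (size g').+1).2 / radial_weight (size g')
     + (k.-1)%:R * ((ls (size g').+1).1 / radial_weight (size g').+1)).
Proof.
rewrite /radial_state /= -mulr_sumr (bigD1 g1) //= eqxx; congr (_ * (_ + _)).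
rewrite (eq_bigr (fun _ => (ls (size g').+1).1 / radial_weight (size g').+1)) => [|e /negbTE -> //].
by rewrite sumr_const cardC1 card_ord mulr_natl.
Qed.

Lemma radial_sum_nil ls :
  \sum_(e < k) radial_state ls [::] e = (\sum_(j < k) chi j) * (ls 0%N).1 / root_k.
Proof. by rewrite -!mulr_suml. Qed.

(* One Grover step maps the radial state of ls to that of line_step k c ls
   (on reduced words: the walk only ever sees reduced words). *)
Lemma radial_step ls (h : seq 'I_k) (tau : 'I_k) : reduced h ->
  2%:R / k%:R * (\sum_(e < k) radial_state ls (gmul tau h) e)
    - radial_state ls (gmul tau h) tau
  = radial_state (line_step k c ls) h tau.
Proof.
case: h => [|h1 h'] red_h.
- by rewrite [gmul _ _]/= radial_sum_cons /radial_state /= eqxx; radial_field.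
- case: (eqVneq h1 tau) red_h => [<-|ne] red_h.
  + rewrite [gmul _ _]/= eqxx.
    case: h' red_h => [|h2 h''] red_h.
    * rewrite radial_sum_nil /radial_state /= eqxx /radial_weight expr0 mulr1 !mulrA.
      rewrite -chi_eigen; radial_field.
    * move: (red_h); rewrite /reduced /= => /andP[ne12 _].
      rewrite radial_sum_cons /radial_state /= (negbTE ne12) eqxx.
      radial_field.
  + have -> : gmul tau (h1 :: h') = tau :: h1 :: h' by rewrite /= (negbTE ne).
    rewrite radial_sum_cons /radial_state /= eqxx.
    rewrite eq_sym (negbTE ne); radial_field.
Qed.

Lemma tree_state_radial (phi : 'I_k -> algC) :
  (forall e, phi e = chi e / root_k) ->
  forall t g e, reduced g ->
  tree_state_at phi t g e = radial_state (line_state_at k c t) g e.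
Proof.
move=> phi_chi; elim=> [|t IH] g e red_g.
  by case: g red_g => [|g1 g'] _ /=; rewrite /radial_state /line_init /=;
     rewrite ?phi_chi ?mulr1 // !mul0r if_same mulr0.
rewrite /tree_state_at iterS -/(tree_state_at phi t) /grover_step.
rewrite (eq_bigr (fun e' => (2%:R / k%:R - (e' == e)%:R) *
           radial_state (line_state_at k c t) (gmul e g) e')) => [|e' _].
  by rewrite grover_coin_sum radial_step.
by rewrite IH // reduced_gmul.
Qed.

(* Unimodular phases make the radial state spread probability evenly. *)
Hypothesis chi_unit : forall e, `|chi e| = 1.

Lemma norm_radial_weight n (y : algC) :
  `|y / radial_weight n| ^+ 2 = `|y| ^+ 2 / (k%:R * (k.-1)%:R ^+ n).
Proof.
rewrite normrM normfV /radial_weight normrM normrX.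
rewrite ![`|sqrtC _|]ger0_norm ?sqrtC_ge0 ?ler0n //.
by rewrite expr_div_n exprMn -exprM mulnC exprM !sqrtCK.
Qed.

Lemma norm_radial_nil ls :
  \sum_(e < k) `|radial_state ls [::] e| ^+ 2 = `|(ls 0%N).1| ^+ 2.
Proof.
rewrite (eq_bigr (fun _ => `|(ls 0%N).1| ^+ 2 / k%:R)) => [|e _].
  by rewrite sumr_const card_ord -[_ *+ k]mulr_natr mulfVK // pnatr_eq0 -lt0n k_gt0.
rewrite /radial_state -mulrA normrM chi_unit mul1r.
by have := norm_radial_weight 0 (ls 0%N).1; rewrite /radial_weight expr0 !mulr1.
Qed.

Lemma norm_radial_cons ls g1 g' :
  \sum_(e < k) `|radial_state ls (g1 :: g') e| ^+ 2 =
  (`|(ls (size g').+1).1| ^+ 2 + `|(ls (size g').+1).2| ^+ 2)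
    / (k%:R * (k.-1)%:R ^+ size g').
Proof.
rewrite (bigD1 g1) //= /radial_state eqxx.
rewrite (eq_bigr (fun _ => `|(ls (size g').+1).1 / radial_weight (size g').+1| ^+ 2))
  => [|e /negbTE ->]; last by rewrite normrM chi_unit mul1r.
rewrite sumr_const cardC1 card_ord normrM chi_unit mul1r !norm_radial_weight.
rewrite -[_ *+ k.-1]mulr_natl [_ ^+ (size g').+1]exprS; field.
by rewrite expf_eq0 mulr1 !pnatr_eq0 !eqn0Ngt k_gt0 predk_gt0 andbF.
Qed.

Theorem tree_dist_prob_radial (phi : 'I_k -> algC) :
  (forall e, phi e = chi e / root_k) ->
  forall t x, tree_dist_prob phi t x = line_prob k c t x.
Proof.
move=> phi_chi t x; rewrite /tree_dist_prob.
under eq_bigr => w red_w do under eq_bigr => e _ do rewrite tree_state_radial //.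
case: x => [|n].
  rewrite (eq_bigr (fun _ => `|(line_state_at k c t 0%N).1| ^+ 2)) => [|w _].
    rewrite sum_reduced_const (eq_bigr (fun _ => 1%N)) => [|w _]; last by rewrite tuple0.
    by rewrite sum_nat_const card_tuple mulr1.
  by rewrite tuple0 norm_radial_nil.
rewrite (eq_bigr (fun _ => (`|(line_state_at k c t n.+1).1| ^+ 2
    + `|(line_state_at k c t n.+1).2| ^+ 2) / (k%:R * (k.-1)%:R ^+ n))) => [|w _].
  rewrite sum_reduced_const count_reduced natrM natrX mulfVK //.
  by rewrite mulf_neq0 ?expf_neq0 // pnatr_eq0 -lt0n ?k_gt0 ?predk_gt0.
case: w => [[|g1 g'] //= /eqP[size_w]].
by rewrite norm_radial_cons size_w.
Qed.

End RadialAnsatz.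

Lemma norm_omega k : (0 < k)%N -> `|omega k| = 1.
Proof.
by move=> k_gt0; rewrite /omega normrX norm_rootC normrN1 rootC1 // expr1n.
Qed.

(* and, being a k-th root of unity different from 1 (its square root
   k.-root (-1) is neither 1 nor -1), its powers sum to 0. *)
Lemma sum_omega_powers k : (2 <= k)%N -> \sum_(j < k) omega k ^+ j = 0.
Proof.
move=> k_ge2; have k_gt0 : (0 < k)%N by apply: leq_trans k_ge2.
set z := k.-root (-1 : algC).
have zk : z ^+ k = -1 by rewrite /z rootCK.
have omega_k : omega k ^+ k = 1 by rewrite /omega -/z exprAC zk sqrrN expr1n.
have omega_neq1 : omega k - 1 != 0.
  rewrite /omega -/z -[1](expr1n _ 2) subr_sqr mulf_eq0 negb_or !subr_eq0.
  apply/andP; split.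
    apply/eqP => z_eq; move/eqP: zk.
    by rewrite z_eq expr1n -addr_eq0 -mulr2n pnatr_eq0.
  rewrite addr_eq0; apply/eqP => z_eq.
  have z_nonneg : (z < 0) = false by exact: rootC_lt0.
  by move: z_nonneg; rewrite z_eq oppr_lt0 ltr01.
have := subrX1 (omega k) k; rewrite omega_k subrr => /esym /eqP.
by rewrite mulf_eq0 (negbTE omega_neq1) => /eqP.
Qed.

Theorem mainTheorem2 (k : nat) (hk : (3 <= k)%N) :
  forall t x : nat,
    tree_dist_prob (@phiU k) t x = line_prob k 1 t x /\
    tree_dist_prob (@phiWU k) t x = line_prob k (-1) t x.
Proof.
have k_ge2 : (2 <= k)%N by apply: ltnW.
have k_pos : (0 < k)%N := ltnW k_ge2.
have natk_neq0 : k%:R != 0 :> algC by rewrite pnatr_eq0 -lt0n k_pos.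
move=> t x; split.
- (* phi^U = 1 / sqrt k: the constant vector is fixed by the Grover coin. *)
  apply: (@tree_dist_prob_radial k k_ge2 (fun _ => 1) 1) => [e|e|e].
  + by rewrite sumr_const card_ord mulfVK // mulr1 mulr2n addrK.
  + exact: normr1.
  + by rewrite /phiU div1r.
- (* phi^WU = omega^j / sqrt k: it is orthogonal to the constant vector,
     so the Grover coin acts on it as -1. *)
  apply: (@tree_dist_prob_radial k k_ge2 (fun j => omega k ^+ j) (-1)) => [e|e|e].
  + by rewrite sum_omega_powers // mulr0 sub0r mulrN1.
  + by rewrite normrX norm_omega // expr1n.
  + by [].
Qed.
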